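(* Let $n\ge2$, $1\le s\le\lfloor n/2\rfloor$, $0\le t\le\lfloor n/2\rfloor$. Let $E_0\subset\mathbb F_2^s$, $\overline{E_0}=\mathbb F_2^s\setminus E_0$, and $E_1=\overline{E_0}\times\mathbb F_2^t$. Let $\phi_0:E_0\to\mathbb F_2^{n-s}$ and $\phi_1:E_1\to\mathbb F_2^{n-s-t}$ be injective maps. For $X=(x_1,\dots,x_n)\in\mathbb F_2^n$ write $X_{(i,j)}=(x_i,\dots,x_j)$. Define $f:\mathbb F_2^n\to\mathbb F_2$ by $f(X)=\phi_0(X_{(1,s)})\cdot X_{(s+1,n)}$ if $X_{(1,s)}\in E_0$, and $f(X)=\phi_1(X_{(1,s+t)})\cdot X_{(s+t+1,n)}$ if $X_{(1,s+t)}\in E_1$. Let $T_0=\phi_0(E_0)$ and $T_1=\phi_1(E_1)$. Then: (a) if $t\ne0$ and $T_0\subset\mathbb F_2^t\times\overline{T_1}$, where $\overline{T_1}=\mathbb F_2^{n-s-t}\setminus T_1$, then $W_f(\omega)\in\{0,\pm2^{n-s},\pm2^{n-s-t}\}$ for all $\omega\in\mathbb F_2^n$; (b) if $t=0$, $T_0\cap T_1\ne\emptyset$ and $T_0\ne T_1$, then $W_f(\omega)\in\{0,\pm2^{n-s},\pm2^{n-s+1}\}$ for all $\omega\in\mathbb F_2^n$.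
   Context: $W_f(\omega)=\sum_{X\in\mathbb F_2^n}(-1)^{f(X)\oplus\omega\cdot X}$, with $\cdot$ the dot product over $\mathbb F_2$. *)

(* F_2^m is modelled as {ffun 'I_m -> bool} (bit i = x_{i+1}). *)
From HB Require Import structures.
From mathcomp Require Import all_boot all_order all_algebra.
Set Implicit Arguments. Unset Strict Implicit. Unset Printing Implicit Defensive.
Import Order.TTheory GRing.Theory Num.Theory.

Notation bvec m := {ffun 'I_m -> bool}.

Definition bit (n : nat) (X : bvec n) (k : nat) : bool :=
  oapp X false (insub k : option 'I_n).

(* sub_vec X a m = (x_{a+1}, ..., x_{a+m});  X_(i,j) = sub_vec X (i-1) (j-i+1) *)
Definition sub_vec (n : nat) (X : bvec n) (a m : nat) : bvec m :=
  [ffun i : 'I_m => bit X (a + i)].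

Definition dotb (m : nat) (x y : bvec m) : bool :=
  \big[addb/false]_(i < m) (x i && y i).

Definition walsh (n : nat) (f : bvec n -> bool) (w : bvec n) : int :=
  (\sum_(X : bvec n) (-1) ^+ (f X (+) dotb w X))%R.

(* E_1 = complement(E_0) x F_2^t, as a subset of F_2^(s+t) *)
Definition E1set (s t : nat) (E0 : {set bvec s}) : {set bvec (s + t)} :=
  [set y : bvec (s + t) | sub_vec y 0 s \notin E0].

Definition fcons (n s t : nat) (E0 : {set bvec s})
  (phi0 : bvec s -> bvec (n - s)) (phi1 : bvec (s + t) -> bvec (n - s - t))
  (X : bvec n) : bool :=
  if sub_vec X 0 s \in E0
  then dotb (phi0 (sub_vec X 0 s)) (sub_vec X s (n - s))
  else dotb (phi1 (sub_vec X 0 (s + t))) (sub_vec X (s + t) (n - s - t)).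

From HB Require Import structures.
From mathcomp Require Import all_boot all_order all_algebra.
From mathcomp Require Import zify.
Import Order.TTheory GRing.Theory Num.Theory.
Set Implicit Arguments. Unset Strict Implicit. Unset Printing Implicit Defensive.

(* The function f = fcons E0 phi0 phi1 is glued from two
   "partial Maiorana-McFarland" pieces: on inputs whose prefix a of length k
   lies in a set P it equals g(a).z, where z is the complementary suffix of
   length m = n - k and g is injective on P.  Splitting X = (a, z) and
   w = (wa, wz), the Walsh sum of such a piece is
     sum_(a in P) (-1)^(wa.a) sum_z (-1)^((g a + wz).z)
   and by orthogonality of the characters of F_2^m the inner sum is 2^m when
   g a = wz and 0 otherwise; injectivity of g leaves at most one surviving a.
   Hence each piece contributes either 0 or +-2^m (walsh_piece), and
   W_f(w) = (0 or +-2^(n-s)) + (0 or +-2^(n-s-t)) (walsh_fcons).  Part (a)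
   follows because the hypothesis T0 <= F_2^t x complement(T1) forbids both
   terms from being nonzero; part (b) because for t = 0 both terms are
   multiples of the same power 2^(n-s). *)

Lemma bitE n (X : bvec n) (i : 'I_n) : bit X i = X i.
Proof. by rewrite /bit valK. Qed.

Lemma bit_out n (X : bvec n) k : n <= k -> bit X k = false.
Proof. by move=> nk; rewrite /bit insubF // ltnNge nk. Qed.

Lemma bit_sub n (X : bvec n) a m i :
  bit (sub_vec X a m) i = (i < m) && bit X (a + i).
Proof.
case: (ltnP i m) => im /=; last by rewrite bit_out.
by have := bitE (sub_vec X a m) (Ordinal im); rewrite ffunE.
Qed.

Lemma sub_vec_sub n (X : bvec n) a m b k : b + k <= m ->
  sub_vec (sub_vec X a m) b k = sub_vec X (a + b) k.
Proof.
move=> bkm; apply/ffunP => i; rewrite !ffunE bit_sub addnA.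
by have -> : b + i < m by have := ltn_ord i; lia.
Qed.

Definition splitv k m n (X : bvec n) : bvec k * bvec m :=
  (sub_vec X 0 k, sub_vec X k m).

Definition joinv k m n (p : bvec k * bvec m) : bvec n :=
  [ffun i : 'I_n => if i < k then bit p.1 i else bit p.2 (i - k)].

Lemma splitv_bij k m n : k + m = n -> bijective (@splitv k m n).
Proof.
move=> kmn; exists (@joinv k m n).
  move=> X; apply/ffunP => i; rewrite ffunE /= !bit_sub.
  case: ltnP => ik; first by rewrite add0n bitE.
  have im : i - k < m by have := ltn_ord i; lia.
  by rewrite im subnKC ?bitE //; lia.
move=> [a z]; congr pair; apply/ffunP => j; rewrite !ffunE.
  have jn : 0 + j < n by have := ltn_ord j; lia.
  by rewrite (bitE _ (Ordinal jn)) ffunE /= ltn_ord bitE.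
have jn : k + j < n by have := ltn_ord j; lia.
by rewrite (bitE _ (Ordinal jn)) ffunE /= ltnNge leq_addr addKn bitE.
Qed.

Lemma dotb_nat m (x y : bvec m) :
  dotb x y = \big[addb/false]_(0 <= i < m) (bit x i && bit y i).
Proof. by rewrite /dotb big_mkord; apply: eq_bigr => i _; rewrite !bitE. Qed.

Lemma dotb_split k m n (w X : bvec n) : k + m = n ->
  dotb w X = dotb (sub_vec w 0 k) (sub_vec X 0 k)
             (+) dotb (sub_vec w k m) (sub_vec X k m).
Proof.
move=> kmn; rewrite !dotb_nat (@big_cat_nat _ _ _ k) //=; last by lia.
congr addb.
  by apply: eq_big_nat => i /andP[_ ik]; rewrite !bit_sub ik !add0n.
rewrite -{1}(add0n k) big_addn (_ : n - k = m); last by lia.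
by apply: eq_big_nat => i /andP[_ ik]; rewrite !bit_sub ik addnC.
Qed.

Local Open Scope ring_scope.

(* Orthogonality of characters.  Flipping coordinate i is an involution of
   F_2^m which changes c.z by c_i; it pairs off terms of opposite signs. *)
Definition flip m (i : 'I_m) (z : bvec m) : bvec m :=
  [ffun j => if j == i then ~~ z j else z j].

Lemma flipK m (i : 'I_m) : involutive (flip i).
Proof.
by move=> z; apply/ffunP => j; rewrite !ffunE; case: eqP => // _; rewrite negbK.
Qed.

Lemma dotb_flip m (i : 'I_m) (c z : bvec m) :
  dotb c (flip i z) = dotb c z (+) c i.
Proof.
rewrite /dotb (bigD1 i) //= [in RHS](bigD1 i) //= ffunE eqxx.
rewrite (eq_bigr (fun j => c j && z j)); last by move=> j /negPf ji; rewrite ffunE ji.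
by case: (c i); case: (z i); case: (\big[_/_]_(_ | _) _).
Qed.

Lemma char_sum m (c d : bvec m) :
  \sum_(z : bvec m) ((-1) ^+ (dotb c z (+) dotb d z) : int) =
  if c == d then 2%:Z ^+ m else 0.
Proof.
case: eqP => [<-|cd].
  under eq_bigr do rewrite addbb expr0.
  by rewrite sumr_const card_ffun card_bool card_ord natrX.
have [i ci] : exists i, c i != d i.
  apply/existsP; apply: contra_notT cd => /existsPn cd; apply/ffunP => i.
  by have := cd i; rewrite negbK => /eqP.
set S := \sum_(z : bvec m) _.
have S_opp : S = - S.
  rewrite {2}/S -sumrN /S (reindex_inj (inv_inj (flipK i))).
  apply: eq_bigr => z _; rewrite !dotb_flip.
  by move: ci; case: (c i); case: (d i) => //= _;
     case: (dotb c z); case: (dotb d z); rewrite /= ?expr0 ?expr1 ?opprK.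
by move/eqP: S_opp; rewrite -addr_eq0 -mulr2n mulrn_eq0 => /eqP.
Qed.

Definition signed (b e : bool) (x : int) : int := if b then (-1) ^+ e * x else 0.

Lemma sum_injective_fibre (T U : finType) (P : {set T}) (g : T -> U) (y : U)
    (h : T -> bool) (C : int) : {in P &, injective g} ->
  exists e : bool,
    \sum_(a : T) (if a \in P then (-1) ^+ h a * (if g a == y then C else 0) else 0)
    = signed (y \in g @: P) e C.
Proof.
move=> g_inj; rewrite /signed; case: (boolP (y \in g @: P)) => [/imsetP[a0 a0P ->]|yP].
  exists (h a0); rewrite (bigD1 a0) //= a0P eqxx big1 ?addr0 // => a aa0.
  case: ifP => // aP; case: eqP => [/(g_inj _ _ aP a0P) aE|]; last by rewrite mulr0.
  by rewrite aE eqxx in aa0.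
exists false; apply: big1 => a _; case: ifP => // aP.
by case: eqP => [gaE|]; [rewrite -gaE imset_f in yP | rewrite mulr0].
Qed.

Lemma walsh_piece n k m (P : {set bvec k}) (g : bvec k -> bvec m) (w : bvec n) :
  (k + m = n)%N -> {in P &, injective g} ->
  exists e : bool,
    \sum_(X : bvec n) (if sub_vec X 0 k \in P then
      (-1) ^+ (dotb (g (sub_vec X 0 k)) (sub_vec X k m) (+) dotb w X) else 0 : int)
    = signed (sub_vec w k m \in g @: P) e (2%:Z ^+ m).
Proof.
move=> kmn g_inj; set wa := sub_vec w 0 k; set wz := sub_vec w k m.
have [e He] := sum_injective_fibre wz (dotb wa) (2%:Z ^+ m) g_inj.
exists e; rewrite -He.
transitivity (\sum_(a : bvec k) \sum_(z : bvec m) (if a \in P then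
    (-1) ^+ (dotb (g a) z (+) (dotb wa a (+) dotb wz z)) else 0 : int)).
  rewrite pair_big (reindex _ (onW_bij _ (splitv_bij kmn))) /=.
  by apply: eq_bigr => X _; rewrite (dotb_split w _ kmn).
apply: eq_bigr => a _; case: ifP => aP; last by rewrite big1.
rewrite -char_sum mulr_sumr; apply: eq_bigr => z _.
by rewrite addbCA signr_addb.
Qed.

Lemma walsh_fcons n s t (E0 : {set bvec s})
    (phi0 : bvec s -> bvec (n - s)) (phi1 : bvec (s + t) -> bvec (n - s - t))
    (w : bvec n) : (s + t <= n)%N ->
  {in E0 &, injective phi0} -> {in E1set t E0 &, injective phi1} ->
  exists e0 e1 : bool,
    walsh (fcons E0 phi0 phi1) w =
      signed (sub_vec w s (n - s) \in phi0 @: E0) e0 (2%:Z ^+ (n - s)) +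
      signed (sub_vec (sub_vec w s (n - s)) t (n - s - t) \in phi1 @: E1set t E0)
             e1 (2%:Z ^+ (n - s - t)).
Proof.
move=> stn inj0 inj1.
have [e0 H0] := @walsh_piece n s (n - s) E0 phi0 w ltac:(lia) inj0.
have [e1 H1] := @walsh_piece n (s + t) (n - s - t) (E1set t E0) phi1 w ltac:(lia) inj1.
exists e0, e1; rewrite sub_vec_sub ?addn0 -?H0 -?H1; last by lia.
rewrite /walsh -big_split; apply: eq_bigr => X _ /=.
rewrite /fcons /E1set inE sub_vec_sub ?add0n //; last by lia.
by case: ifP => _; rewrite ?addr0 ?add0r.
Qed.

Lemma signed_add_exclusive b0 b1 e0 e1 x y : ~~ (b0 && b1) ->
  signed b0 e0 x + signed b1 e1 y \in [:: 0; x; - x; y; - y].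
Proof.
rewrite /signed; case: b0; case: b1 => //= _;
by case: e0; case: e1; rewrite ?expr0 ?expr1 ?mul1r ?mulN1r ?addr0 ?add0r !inE eqxx ?orbT.
Qed.

Lemma signed_add_same b0 b1 e0 e1 x y : y = x ->
  signed b0 e0 x + signed b1 e1 y \in [:: 0; x; - x; x * 2; - (x * 2)].
Proof.
move->; rewrite /signed mulr_natr mulr2n; case: b0; case: b1;
by case: e0; case: e1;
   rewrite ?expr0 ?expr1 ?mul1r ?mulN1r ?addr0 ?add0r ?subrr ?addNr ?opprD !inE eqxx ?orbT.
Qed.

Local Close Scope ring_scope.

Theorem mainTheorem10 (n s t : nat) (E0 : {set bvec s})
  (phi0 : bvec s -> bvec (n - s)) (phi1 : bvec (s + t) -> bvec (n - s - t)) :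
  2 <= n -> 1 <= s -> s <= n./2 -> t <= n./2 ->
  {in E0 &, injective phi0} ->
  {in E1set t E0 &, injective phi1} ->
  let T0 := phi0 @: E0 in
  let T1 := phi1 @: E1set t E0 in
  let f := fcons E0 phi0 phi1 in
  (* (a) *)
  (t != 0 ->
   (forall y, y \in T0 -> sub_vec y t (n - s - t) \notin T1) ->
   forall w : bvec n,
     walsh f w \in [:: 0%R; (2%:Z ^+ (n - s))%R; (- 2%:Z ^+ (n - s))%R;
                        (2%:Z ^+ (n - s - t))%R; (- 2%:Z ^+ (n - s - t))%R])
  /\
  (* (b): when t = 0, F_2^(n-s-t) = F_2^(n-s); T0 is transported along the
     identity re-indexing y |-> sub_vec y 0 (n-s-t) *)
  (t = 0 ->
   [set sub_vec y 0 (n - s - t) | y in T0] :&: T1 != set0 ->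
   [set sub_vec y 0 (n - s - t) | y in T0] != T1 ->
   forall w : bvec n,
     walsh f w \in [:: 0%R; (2%:Z ^+ (n - s))%R; (- 2%:Z ^+ (n - s))%R;
                        (2%:Z ^+ (n - s + 1))%R; (- 2%:Z ^+ (n - s + 1))%R]).
Proof.
move=> _ _ sn tn inj0 inj1 T0 T1 f.
have stn : s + t <= n by lia.
split=> [_ T0_T1 w | t0 _ _ w].
- have [e0 [e1 ->]] := walsh_fcons w stn inj0 inj1.
  apply: signed_add_exclusive; apply/andP => -[/T0_T1 notT1 inT1].
  by rewrite inT1 in notT1.
- subst t; have [e0 [e1 ->]] := walsh_fcons w stn inj0 inj1.
  by rewrite addn1 exprSr; apply: signed_add_same; rewrite subn0.
Qed.
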